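(* Let $m \geq 1$ be an integer and let $q \in (m,m+1)$ be a Pisot number which is not an algebraic unit. Then every Galois conjugate $q'$ of $q$ satisfies $|q'| \geq \frac{2}{m+1} \geq c_m$.
   Context: A Pisot number is a real algebraic integer $q>1$ all of whose other Galois conjugates have absolute value strictly less than $1$. Define $c_1 = \frac{\sqrt{5}-1}{2}$; define $c_2$ to be the absolute value of the root of minimal modulus of $x^4-3x^3+x^2-2x-1$; and for $m \geq 3$ define $c_m = \frac{m+1-\sqrt{m^2+2m-3}}{2}$. *)

From HB Require Import structures.
From mathcomp Require Import all_boot all_order all_algebra all_field.
From mathcomp Require Import algC algnum.
Set Implicit Arguments. Unset Strict Implicit. Unset Printing Implicit Defensive.
Import Order.TTheory GRing.Theory Num.Theory.
Local Open Scope ring_scope.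

Definition galois_conjugate (x z : algC) : Prop := root (minCpoly x) z.

Definition pisot (q : algC) : Prop :=
  [/\ q \is Num.real, 1 < q, q \in Aint &
      forall z, galois_conjugate q z -> z != q -> `|z| < 1].

Definition algebraic_unit (x : algC) : Prop :=
  [/\ x != 0, x \in Aint & x^-1 \in Aint].

Definition quartic2 : {poly algC} := 'X^4 - 3 * 'X^3 + 'X^2 - 2 * 'X - 1.

Definition quartic2_roots : seq algC := sval (closed_field_poly_normal quartic2).

Definition c2 : algC :=
  \big[Num.min/ `|head 0 quartic2_roots|]_(z <- quartic2_roots) `|z|.

(* The constants c_m, m >= 1 (value at m = 0 is irrelevant, set to 0). *)
Definition c (m : nat) : algC :=
  match m with
  | 0 => 0
  | 1 => (sqrtC 5 - 1) / 2
  | 2 => c2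
  | _ => (m.+1%:R - sqrtC (m%:R ^+ 2 + 2 * m%:R - 3)) / 2
  end.

(* The constant coefficient a0 of the minimal polynomial of q is, up to sign,
   the product of all conjugates of q.  As q is an algebraic integer but not a
   unit, |a0| is an integer at least 2; as q is Pisot, all conjugates other
   than q and q' have modulus < 1.  Hence 2 <= |a0| <= q |q'| < (m+1) |q'|.
   For the constants, c_m = 2 / (m + 1 + sqrt((m+1)^2 - 4)) when m >= 3,
   c_1 <= 1 as sqrt 5 <= 3, and the quartic defining c_2 has a root of modulus
   at most 2/3: otherwise the four products of three of its roots, which are
   the -1/z_i, would have modulus at most 3/2, whereas by Vieta the sum of
   their cubes is 23. *)

From HB Require Import structures.
From mathcomp Require Import all_boot all_order all_algebra all_field.
From mathcomp Require Import algC algnum ring.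
Import Order.TTheory GRing.Theory Num.Theory.
Local Open Scope ring_scope.

Lemma cons_poly_drop1 {R : nzSemiRingType} (p : {poly R}) :
  cons_poly p`_0 (drop_poly 1 p) = p.
Proof. by apply/polyP => -[|i]; rewrite coef_cons // coef_drop_poly addn1. Qed.

Lemma root_deriv_prod_XsubC {R : comNzRingType} (r : seq R) x :
  x \in rem x r -> root (\prod_(z <- r) ('X - z%:P))^`() x.
Proof.
move=> xrr; have xr := mem_rem xrr.
rewrite (perm_big _ (perm_to_rem xr)) big_cons.
rewrite (perm_big _ (perm_to_rem xrr)) big_cons /= mulrA.
by rewrite /root !derivM !hornerE subrr !(mul0r, mulr0, add0r, addr0).
Qed.

Lemma minCpoly_min_size {x} {g : {poly rat}} :
  g != 0 -> root (map_poly ratr g) x -> (size (minCpoly x) <= size g)%N.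
Proof.
by have [p [-> _] ->] := minCpolyP x; rewrite size_map_poly; apply: dvdp_leq.
Qed.

Lemma rootN_deriv_minCpoly x : ~~ root (minCpoly x)^`() x.
Proof.
have [p [Dp p_monic] _] := minCpolyP x.
have p_gt1 : (1 < size p)%N.
  by have := size_minCpoly x; rewrite Dp size_map_poly.
have dp_neq0 : p^`() != 0.
  apply/eqP => /(congr1 (fun q : {poly rat} => q`_(size p).-2)) /eqP.
  rewrite coef_deriv coef0.
  have -> : (size p).-2.+1 = (size p).-1 by case: (size p) p_gt1 => [|[]].
  rewrite -lead_coefE (monicP p_monic) pnatr_eq0.
  by case: (size p) p_gt1 => [|[]].
apply: contraL (lt_size_deriv (monic_neq0 p_monic)); rewrite Dp deriv_map.
by move=> /(minCpoly_min_size dp_neq0); rewrite Dp size_map_poly -leqNgt.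
Qed.

Lemma minCpoly_coef0_neq0 x : x != 0 -> (minCpoly x)`_0 != 0.
Proof.
move=> x_neq0; have [p [Dp p_monic] _] := minCpolyP x.
rewrite Dp coef_map fmorph_eq0; apply/eqP => p0_0.
have := cons_poly_drop1 p; rewrite p0_0 cons_poly_def addr0.
set d := drop_poly 1 p; move=> Dd.
have d_neq0 : d != 0.
  by apply: contra_neq (monic_neq0 p_monic) => d0; rewrite -Dd d0 mul0r.
have := root_minCpoly x.
rewrite Dp -Dd rmorphM /= map_polyX rootM rootX (negbTE x_neq0) orbF.
move=> /(minCpoly_min_size d_neq0); rewrite Dp size_map_poly -Dd size_mulX //.
by rewrite ltnn.
Qed.

Lemma Aint_inv_coef0_norm1 x :
  x \in Aint -> `|(minCpoly x)`_0| = 1 -> x^-1 \in Aint.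
Proof.
move=> xA a0_norm1; have pZ : minCpoly x \is a polyOver Num.int := xA.
set a0 := (minCpoly x)`_0 in a0_norm1.
set d := drop_poly 1 (minCpoly x).
have a0Z : a0 \is a Num.int := polyOverP pZ 0.
have dxA : d.[x] \in Aint.
  apply: rpred_horner xA; apply/polyOverP => i.
  by rewrite coef_drop_poly Aint_Cint ?(polyOverP pZ).
have a0_sqr : a0 * a0 = 1.
  by rewrite -[LHS]expr2 -(real_normK (Rreal_int a0Z)) a0_norm1 expr1n.
have /eqP := root_minCpoly x.
rewrite -[minCpoly x]cons_poly_drop1 horner_cons -/a0 -/d.
move=> /eqP; rewrite addr_eq0 => /eqP dx.
have -> : x^-1 = - (a0 * d.[x]).
  by apply: mulr1_eq; rewrite mulrN mulrCA [x * _]mulrC dx mulrN opprK a0_sqr.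
by rewrite rpredN rpredM // Aint_Cint.
Qed.

Lemma minCpoly_coef0_normr_ge2 {x} :
  x \in Aint -> x != 0 -> ~ algebraic_unit x -> 2 <= `|(minCpoly x)`_0|.
Proof.
move=> xA x_neq0 x_nonunit.
have /natrP[n Dn] := natr_norm_int (polyOverP (xA : _ \is a polyOver _) 0).
have n_neq0 : n != 0%N.
  by rewrite -(pnatr_eq0 algC) -Dn normr_eq0 minCpoly_coef0_neq0.
have n_neq1 : n != 1%N.
  apply: contra_notN x_nonunit => /eqP n1.
  by split; rewrite ?Aint_inv_coef0_norm1 // Dn n1.
by rewrite Dn ler_nat; case: n n_neq0 n_neq1 {Dn} => [|[]].
Qed.

Lemma pisot_normr_coef0_le {q q'} :
  pisot q -> galois_conjugate q q' -> q' != q ->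
  `|(minCpoly q)`_0| <= q * `|q'|.
Proof.
case=> _ q_gt1 _ conj_small q'_root q'_neq.
have [r Dp] := closed_field_poly_normal (minCpoly q).
rewrite (monicP (minCpoly_monic q)) scale1r in Dp.
have qr : q \in r by rewrite -root_prod_XsubC -Dp root_minCpoly.
have q_simple : q \notin rem q r.
  apply: contra (rootN_deriv_minCpoly q); rewrite Dp.
  exact: root_deriv_prod_XsubC.
have q'r : q' \in rem q r.
  have : q' \in r by rewrite -root_prod_XsubC -Dp.
  by rewrite (perm_mem (perm_to_rem qr)) inE (negbTE q'_neq).
have others_small z : z \in rem q' (rem q r) -> 0 <= `|z| <= 1.
  move=> zr; rewrite normr_ge0 ltW // conj_small //.
    by rewrite /galois_conjugate Dp root_prod_XsubC (mem_rem (mem_rem zr)).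
  by apply: contraNneq q_simple => zq; rewrite -{1}zq (mem_rem zr).
rewrite Dp coef0_prod_XsubC normrM normrX normrN1 expr1n mul1r normr_prod.
rewrite (perm_big _ (perm_to_rem qr)) big_cons.
rewrite (perm_big _ (perm_to_rem q'r)) big_cons /=.
have q_gt0 : 0 < q := lt_trans ltr01 q_gt1.
rewrite gtr0_norm // mulrA ler_piMr ?mulr_ge0 ?normr_ge0 ?(ltW q_gt0) //.
by rewrite big_seq prodr_ile1.
Qed.

Lemma bigmin_real_le {R : numDomainType} {I : eqType}
    (r : seq I) x0 (F : I -> R) j :
  x0 \is Num.real -> (forall i, F i \is Num.real) -> j \in r ->
  \big[Num.min/x0]_(i <- r) F i <= F j.
Proof.
move=> x0R FR; elim: r => [|i r IHr] //; rewrite big_cons inE.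
have minR : \big[Num.min/x0]_(k <- r) F k \is Num.real by apply: bigmin_real.
rewrite comparable_ge_min ?real_comparable // => /predU1P[->|/IHr ->].
  by rewrite lexx.
by rewrite orbT.
Qed.

Lemma prod_XsubC4 {R : comNzRingType} (a b c d : R) :
  \prod_(z <- [:: a; b; c; d]) ('X - z%:P) =
  Poly [:: a * b * c * d; - (a * b * c + a * b * d + a * c * d + b * c * d);
           a * b + a * c + a * d + b * c + b * d + c * d; - (a + b + c + d); 1].
Proof.
rewrite !big_cons big_nil /= !cons_poly_def.
rewrite !(rmorphD, rmorphN, rmorphM) /= polyC1; ring.
Qed.

Lemma polyseq_quartic2 : quartic2 = [:: -1; -2; 1; -3; 1] :> seq algC.
Proof.
rewrite -(PolyK (c := 0) (s := [:: -1; -2; 1; -3; 1])) ?oner_neq0 //.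
congr polyseq.
apply/polyP => i; rewrite /quartic2 !coefE.
by do 6?[case: i => [|i]] => /=; rewrite ?nth_nil; ring.
Qed.

Lemma cofactor_cube_le {R : numFieldType} {z t : R} :
  2 / 3 < `|z| -> z * t = -1 -> (2 * `|t|) ^+ 3 <= 27.
Proof.
move=> z_big /(congr1 Num.norm); rewrite normrM normrN normr1 => zt1.
have z_pos : 0 < `|z| by apply: lt_trans z_big; rewrite divr_gt0 ?ltr0n.
have t_le : 2 * `|t| <= 3.
  rewrite -(ler_pM2r z_pos) -mulrA [`|t| * _]mulrC zt1 mulr1 mulrC.
  by rewrite ltW // -ltr_pdivrMr ?ltr0n.
rewrite (_ : 27 = 3 ^+ 3); last by rewrite -natrX.
by rewrite lerXn2r ?nnegrE ?mulr_ge0 ?ler0n.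
Qed.

Lemma normr_add4_le {R : numDomainType} (w x y z : R) :
  `|w + x + y + z| <= `|w| + `|x| + `|y| + `|z|.
Proof.
apply: le_trans (ler_normD _ _) _; rewrite lerD2r.
by apply: le_trans (ler_normD _ _) _; rewrite lerD2r ler_normD.
Qed.

Lemma quartic2_vieta_small_root {R : numFieldType} {a b c d : R} :
  a + b + c + d = 3 -> a * b + a * c + a * d + b * c + b * d + c * d = 1 ->
  a * b * c + a * b * d + a * c * d + b * c * d = 2 -> a * b * c * d = -1 ->
  has (fun z => `|z| <= 2 / 3) [:: a; b; c; d].
Proof.
move=> e1 e2 e3 e4; apply/contraT; rewrite -all_predC /=.
have real23 : (2 / 3 : R) \is Num.real by rewrite ger0_real // divr_ge0 ?ler0n.
rewrite -!real_ltNge ?normr_real // => /and5P[a_big b_big c_big d_big _].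
have cube_sum : (b * c * d) ^+ 3 + (a * c * d) ^+ 3 + (a * b * d) ^+ 3
                + (a * b * c) ^+ 3 = 23.
  (* Newton's identity for the cubes of the t_i = e4 / z_i, whose elementary
     symmetric functions are e3, e2 e4, e1 e4^2 and e4^3. *)
  have -> : (b * c * d) ^+ 3 + (a * c * d) ^+ 3 + (a * b * d) ^+ 3
            + (a * b * c) ^+ 3
      = (a * b * c + a * b * d + a * c * d + b * c * d) ^+ 3
        - 3 * (a * b * c + a * b * d + a * c * d + b * c * d)
            * (a * b + a * c + a * d + b * c + b * d + c * d) * (a * b * c * d)
        + 3 * (a + b + c + d) * (a * b * c * d) ^+ 2 by ring.
  by rewrite e1 e2 e3 e4; ring.
have : `|(2 * (b * c * d)) ^+ 3 + (2 * (a * c * d)) ^+ 3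
          + (2 * (a * b * d)) ^+ 3 + (2 * (a * b * c)) ^+ 3|
       <= 27 + 27 + 27 + 27.
  apply: le_trans (normr_add4_le _ _ _ _) _.
  have norm_cube (t : R) : `|(2 * t) ^+ 3| = (2 * `|t|) ^+ 3.
    by rewrite normrX normrM normr_nat.
  rewrite !norm_cube !lerD //.
  - by apply: (cofactor_cube_le a_big); rewrite -e4; ring.
  - by apply: (cofactor_cube_le b_big); rewrite -e4; ring.
  - by apply: (cofactor_cube_le c_big); rewrite -e4; ring.
  - by apply: (cofactor_cube_le d_big); rewrite -e4; ring.
have -> : (2 * (b * c * d)) ^+ 3 + (2 * (a * c * d)) ^+ 3
          + (2 * (a * b * d)) ^+ 3 + (2 * (a * b * c)) ^+ 3 = (8 * 23)%:R.
  by rewrite natrM -cube_sum; ring.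
by rewrite normr_nat -!natrD ler_nat.
Qed.

Lemma c2_le : c2 <= 2 / 3.
Proof.
rewrite /c2 /quartic2_roots; case: closed_field_poly_normal => s /= Ds.
have [lc1 quartic2_size] : lead_coef quartic2 = 1 /\ size quartic2 = 5%N.
  by rewrite lead_coefE polyseq_quartic2.
rewrite lc1 scale1r in Ds.
have := size_prod_XsubC s id; rewrite -Ds quartic2_size.
case: s Ds => [|a [|b [|c [|d [|]]]]] //= Ds _.
have := congr1 polyseq (esym Ds).
rewrite prod_XsubC4 polyseq_quartic2 (PolyK (c := 0)) ?oner_neq0 //.
move=> [e4 /oppr_inj e3 e2 /oppr_inj e1].
have /hasP[z z_root z_small] := quartic2_vieta_small_root e1 e2 e3 e4.
apply: le_trans _ z_small.
by apply: bigmin_real_le z_root => // i; apply: normr_real.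
Qed.

Lemma sub_sqrtC_le (N : algC) :
  2 <= N -> (N - sqrtC (N ^+ 2 - 4)) / 2 <= 2 / N.
Proof.
move=> N_ge2; have N_gt0 : 0 < N by apply: lt_le_trans N_ge2.
set s := sqrtC _.
have s_ge0 : 0 <= s.
  rewrite sqrtC_ge0 subr_ge0 (_ : 4 = 2 ^+ 2); last by rewrite -natrX.
  by apply: lerXn2r; rewrite // nnegrE ?ler0n ?ltW.
have Ns_pos : 0 < N + s by rewrite ltr_wpDr.
have conj_prod : (N - s) * (N + s) = 4.
  by rewrite (_ : _ * _ = N ^+ 2 - s ^+ 2); [rewrite sqrtCK; ring | ring].
have Ns_ge0 : 0 <= N - s by rewrite -(pmulr_lge0 _ Ns_pos) conj_prod ler0n.
rewrite ler_pdivrMr ?ltr0n // mulrAC ler_pdivlMr //.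
apply: le_trans (_ : (N - s) * (N + s) <= _); last by rewrite conj_prod -natrM.
by rewrite ler_wpM2l // lerDl.
Qed.

Lemma c_le m : (1 <= m)%N -> c m <= 2 / m.+1%:R.
Proof.
case: m => [|[|[|m]]] // _.
- rewrite /= divff ?pnatr_eq0 // ler_pdivrMr ?ltr0n // mul1r lerBlDr.
  rewrite natr1 -(sqrCK (ler0n algC 3)).
  by rewrite ler_sqrtC ?nnegrE ?ler0n ?exprn_ge0 // -natrX ler_nat.
- exact: c2_le.
- rewrite /c (_ : m.+3%:R ^+ 2 + 2 * m.+3%:R - 3 = m.+4%:R ^+ 2 - 4 :> algC).
    by apply: sub_sqrtC_le; rewrite ler_nat.
  by rewrite -!nat1r; ring.
Qed.

Theorem theorem2p3 (m : nat) (q : algC) :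
  (1 <= m)%N ->
  m%:R < q -> q < m.+1%:R ->
  pisot q -> ~ algebraic_unit q ->
  forall q' : algC, galois_conjugate q q' ->
    2 / m.+1%:R <= `|q'| /\ c m <= 2 / m.+1%:R.
Proof.
move=> m_ge1 _ q_lt_m1 pisot_q q_nonunit q' q'_conj.
split; last exact: c_le.
have [_ q_gt1 qA _] := pisot_q.
have q_gt0 : 0 < q := lt_trans ltr01 q_gt1.
rewrite ler_pdivrMr ?ltr0n //.
have [->|q'_neq] := eqVneq q' q.
  by rewrite gtr0_norm // -[2]mul1r ler_pM ?ler0n ?(ltW q_gt1) // ler_nat ltnS.
apply: le_trans (minCpoly_coef0_normr_ge2 qA (lt0r_neq0 q_gt0) q_nonunit) _.
apply: le_trans (pisot_normr_coef0_le pisot_q q'_conj q'_neq) _.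
by rewrite mulrC ler_wpM2l ?normr_ge0 ?(ltW q_lt_m1).
Qed.
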